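(* Let $m\ge 1$. An abstract simplicial complex $\mathcal I$ on the vertex set $\{0,1\}^m$ is implementable (i.e. $\mathcal I=\mathcal I(f)$ for some implementable one-player allocation function $f:\mathbb R^m\to\{0,1\}^m$) if and only if there exists a regular subdivision $\mathcal S$ of the point set $\{0,1\}^m$ (of the cube $[0,1]^m$) such that the facets (inclusion-maximal faces) of $\mathcal I$ are precisely the vertex sets of the maximal cells of $\mathcal S$.
   Context: One-player setting with $m$ items: a type is $\theta\in\mathbb R^m$, an allocation is $a\in\{0,1\}^m$ (the characteristic vector of the received bundle). An allocation function is a map $f:\mathbb R^m\to\{0,1\}^m$. It is implementable (truthful/DSIC) if there is a payment function $p:\mathbb R^m\to\mathbb R$ with $\theta\cdot f(\theta)-p(\theta)\ge \theta\cdot f(\theta')-p(\theta')$ for all $\theta,\theta'\in\mathbb R^m$ (quasi-linear additive utilities). For $a\in\{0,1\}^m$ the difference set is $Q_a=\mathrm{cl}\{\theta: f(\theta)=a\}$ (topological closure). The indifference complex of $f$ is $\mathcal I(f)=\{\mathcal O\subseteq\{0,1\}^m : \bigcap_{a\in\mathcal O}Q_a\neq\emptyset\}$. A simplicial complex is implementable if it equals $\mathcal I(f)$ for some implementable $f$. Regular subdivision: for a finite point set $U\subset\mathbb R^m$ and a height function $\lambda:U\to\mathbb R$, project (forgetting the last coordinate) the upper faces (those with an outer normal having positive last coordinate) of $\mathrm{conv}\{(u,\lambda(u)):u\in U\}$; the resulting polytopal subdivision of $\mathrm{conv}(U)$ is the regular subdivision induced by $\lambda$. *)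

From HB Require Import structures.
From mathcomp Require Import all_boot all_order all_algebra.
From mathcomp Require Import reals.
Set Implicit Arguments. Unset Strict Implicit. Unset Printing Implicit Defensive.
Import Order.TTheory GRing.Theory Num.Theory.
Local Open Scope ring_scope.

Section Defs.
Variables (R : realType) (m : nat).

Definition alloc := {ffun 'I_m -> bool}.
Definition typ := 'I_m -> R.

Definition dotp (theta : typ) (a : alloc) : R :=
  \sum_(i < m) (if a i then theta i else 0).

Definition implementable (f : typ -> alloc) : Prop :=
  exists p : typ -> R, forall theta theta' : typ,
    dotp theta (f theta') - p theta' <= dotp theta (f theta) - p theta.

Definition in_closure (S : typ -> Prop) (theta : typ) : Prop :=
  forall e : R, 0 < e -> exists theta', S theta' /\ forall i, `|theta i - theta' i| < e.

Definition diff_set (f : typ -> alloc) (a : alloc) : typ -> Prop :=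
  in_closure (fun theta => f theta = a).

Definition indiff_complex (f : typ -> alloc) (O : {set alloc}) : Prop :=
  exists theta : typ, forall a, a \in O -> diff_set f a theta.

Definition simplicial_complex_on_cube (I : {set alloc} -> Prop) : Prop :=
  (forall O O' : {set alloc}, O' \subset O -> I O -> I O') /\
  (forall a : alloc, I [set a]).

Definition implementable_complex (I : {set alloc} -> Prop) : Prop :=
  exists f : typ -> alloc, implementable f /\
    forall O, I O <-> indiff_complex f O.

Definition facet (I : {set alloc} -> Prop) (O : {set alloc}) : Prop :=
  I O /\ forall O', I O' -> O \subset O' -> O' = O.

(* Regular subdivision of the point set {0,1}^m induced by heights lambda.
   An upper face of conv{(u, lambda u)} has an outer normal (c, t) with t > 0;
   after scaling t = 1 its vertex set is the set of maximizers of
   c . u + lambda u over u in {0,1}^m.  Since every point of {0,1}^m is a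
   vertex of the cube, the vertex set of the projected cell is exactly this
   maximizer set. *)
Definition upper_cell (lambda : alloc -> R) (c : typ) : {set alloc} :=
  [set u | [forall v, dotp c v + lambda v <= dotp c u + lambda u]].

Definition is_cell (lambda : alloc -> R) (S : {set alloc}) : Prop :=
  exists c : typ, S = upper_cell lambda c.

Definition maximal_cell (lambda : alloc -> R) (S : {set alloc}) : Prop :=
  is_cell lambda S /\ forall S', is_cell lambda S' -> S \subset S' -> S' = S.

End Defs.

From HB Require Import structures.
From mathcomp Require Import all_boot all_order all_algebra.
From mathcomp Require Import reals.
From mathcomp Require Import boolp ring lra.
Import Order.TTheory GRing.Theory Num.Theory.
Local Open Scope ring_scope.

(* A truthful allocation function charges a price that depends only on the
   allocation (taxation principle), so with lambda := - price it always
   selects a maximizer of theta . a + lambda a, i.e. a vertex of the upper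
   cell of lambda with normal theta; conversely any such selection is
   truthful.  For such an f the difference set Q_a is exactly the set of
   theta whose upper cell contains a: near theta the selected allocation is
   still a maximizer of the (almost unchanged) objective, and tilting theta
   towards a makes a the unique maximizer.  Hence I(f) consists of the
   subsets of the upper cells of lambda, and its facets are the maximal
   cells. *)

Section FacetsOfSetFamilies.
Variable m : nat.
Implicit Types (P Q : {set alloc m} -> Prop) (O S X : {set alloc m}).

Lemma facet_above P X : P X -> exists2 Y : {set alloc m}, X \subset Y & facet P Y.
Proof.
move=> PX.
have [Y maxY XY] := @maxset_exists _ (fun S => `[< P S >]) X (asboolT PX).
have /maxsetP[PY Ymax] := maxY.
exists Y => //; split; first exact/asboolP.
by move=> Z PZ; apply: Ymax; apply/asboolP.
Qed.

Lemma facet_down_closure P Q :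
  (forall O, P O <-> exists2 S : {set alloc m}, Q S & O \subset S) ->
  forall O, facet P O <-> facet Q O.
Proof.
move=> PE O; split.
- case=> /PE[S QS OS] Omax.
  have SO : S = O by apply: Omax => //; apply/PE; exists S.
  rewrite -SO in Omax *; split => // S' QS' SS'.
  by apply: Omax => //; apply/PE; exists S'.
- case=> QO Omax; split; first by apply/PE; exists O.
  move=> O' /PE[S QS O'S] OO'; apply/eqP; rewrite eqEsubset OO' andbT.
  by rewrite -(Omax S QS (subset_trans OO' O'S)).
Qed.

Lemma down_closure_facet P Q :
  (forall O O', O' \subset O -> P O -> P O') ->
  (forall O, facet P O <-> facet Q O) ->
  forall O, P O <-> exists2 S : {set alloc m}, Q S & O \subset S.
Proof.
move=> Pdown PQ O; split.
- by move/facet_above=> [Y OY /PQ[QY _]]; exists Y.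
- case=> S QS OS; case/facet_above: QS => Y SY /PQ[PY _].
  exact: Pdown _ _ (subset_trans OS SY) PY.
Qed.

End FacetsOfSetFamilies.

Section Dotp.
Context {R : realType} {m : nat}.
Implicit Types (th : typ R m) (a b : alloc m).

Lemma dotp_sub th th' a :
  dotp th a - dotp th' a = dotp (fun i => th i - th' i) a.
Proof.
by rewrite /dotp -sumrB; apply: eq_bigr => i _; case: (a i); rewrite ?subrr.
Qed.

Lemma dotp_lipschitz {th th'} a {e : R} :
  (forall i, `|th i - th' i| <= e) -> `|dotp th a - dotp th' a| <= e *+ m.
Proof.
move=> close; have -> : e *+ m = \sum_(i < m) e by rewrite sumr_const card_ord.
rewrite dotp_sub.
apply: le_trans (ler_norm_sum _ _ _) _; apply: ler_sum => i _.
by case: (a i); rewrite ?normr0 //; apply: le_trans (close i).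
Qed.

Definition tilt a (t : R) th : typ R m :=
  fun i => th i + (if a i then t else - t).

Lemma tilt_gap th {a b} {t : R} : 0 < t -> b != a ->
  dotp th a - dotp th b < dotp (tilt a t th) a - dotp (tilt a t th) b.
Proof.
move=> t_gt0 ba; rewrite -subr_gt0.
have [i0 ba_i0] : exists i, b i != a i.
  apply/existsP; apply: contraR ba => /existsPn ba_eq.
  by apply/eqP/ffunP => i; apply/eqP; rewrite -[_ == _]negbK ba_eq.
pose d i := if a i then t else - t.
have tiltE v : dotp (tilt a t th) v - dotp th v = dotp d v.
  by rewrite dotp_sub; apply: eq_bigr => i _; rewrite /tilt addrAC subrr add0r.
have -> : dotp (tilt a t th) a - dotp (tilt a t th) b - (dotp th a - dotp th b)
    = dotp d a - dotp d b by rewrite -!tiltE; ring.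
rewrite /dotp -sumrB (bigD1 i0) //=.
have rest : 0 <= \sum_(i < m | i != i0)
    ((if a i then d i else 0) - (if b i then d i else 0)).
  by apply: sumr_ge0 => i _; rewrite /d; case: (a i); case: (b i); lra.
have at_i0 : 0 < (if a i0 then d i0 else 0) - (if b i0 then d i0 else 0).
  by move: ba_i0; rewrite /d; case: (a i0); case: (b i0) => //= _; lra.
lra.
Qed.

End Dotp.

Section UpperCellSelection.
Context {R : realType} {m : nat} {lam : alloc m -> R} {f : typ R m -> alloc m}.
Hypothesis f_max : forall th, f th \in upper_cell lam th.

Lemma diff_set_upper_cell a th : diff_set f a th -> a \in upper_cell lam th.
Proof.
move=> cl; rewrite inE; apply/forallP => v; rewrite leNgt; apply/negP => lt_av.
set g := dotp th v + lam v - (dotp th a + lam a).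
have g_gt0 : 0 < g by rewrite subr_gt0.
(* Chosen so that the two perturbations of size [e *+ m] cannot close the gap [g]. *)
pose e := g / (m.*2.+1)%:R.
have e_gt0 : 0 < e by rewrite divr_gt0 // ltr0n.
have eE : e *+ m + e *+ m + e = g.
  by rewrite -mulrnDr addnn addrC -mulrS -mulr_natr divfK // pnatr_eq0.
have [th' [fth'a close]] := cl e e_gt0.
have close' i : `|th i - th' i| <= e by exact: ltW.
have /ler_normlP[da _] := dotp_lipschitz a close'.
have /ler_normlP[_ dv] := dotp_lipschitz v close'.
have := f_max th'; rewrite inE fth'a => /forallP/(_ v).
by rewrite /g in eE; lra.
Qed.

Lemma upper_cell_diff_set a th : a \in upper_cell lam th -> diff_set f a th.
Proof.
move=> a_max e e_gt0; have t_gt0 : 0 < e / 2 by lra.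
exists (tilt a (e / 2) th); split.
- case: (eqVneq (f (tilt a (e / 2) th)) a) => // ne; exfalso.
  have := f_max (tilt a (e / 2) th); rewrite inE => /forallP/(_ a).
  move: a_max; rewrite inE => /forallP/(_ (f (tilt a (e / 2) th))).
  have := tilt_gap th t_gt0 ne; lra.
- move=> i; rewrite /tilt opprD addrA subrr add0r normrN.
  by case: (a i); rewrite ?normrN gtr0_norm //; lra.
Qed.

Lemma indiff_complexE O :
  indiff_complex f O <-> exists2 S : {set alloc m}, is_cell lam S & O \subset S.
Proof.
split.
- case=> th Oth; exists (upper_cell lam th); first by exists th.
  by apply/subsetP => a /Oth; apply: diff_set_upper_cell.
- case=> S [c ->] OS; exists c => a /(subsetP OS).
  exact: upper_cell_diff_set.
Qed.

Lemma upper_cell_implementable : implementable f.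
Proof.
exists (fun th => - lam (f th)) => th th'.
by have := f_max th; rewrite inE => /forallP/(_ (f th')); lra.
Qed.

End UpperCellSelection.

Lemma upper_cell_selection {R : realType} {m : nat} (lam : alloc m -> R) :
  exists f : typ R m -> alloc m, forall th, f th \in upper_cell lam th.
Proof.
exists (fun th => [arg max_(v > [ffun => false]) (dotp th v + lam v)]%O) => th.
by case: arg_maxP => //= v _ vmax; rewrite inE; apply/forallP => w; apply: vmax.
Qed.

Lemma implementable_upper_cell {R : realType} {m : nat} {f : typ R m -> alloc m} :
  implementable f -> (forall a, exists th, f th = a) ->
  exists lam : alloc m -> R, forall th, f th \in upper_cell lam th.
Proof.
move=> [p truthful] f_onto; have [g fgK] := choice f_onto.
have price_eq th th' : f th = f th' -> p th = p th'.
  move=> fE; have := truthful th th'; have := truthful th' th.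
  by rewrite fE; lra.
exists (fun a => - p (g a)) => th; rewrite inE; apply/forallP => v /=.
have := truthful th (g v); rewrite fgK.
have -> : p (g (f th)) = p th by apply: price_eq; rewrite fgK.
lra.
Qed.

Theorem theorem3p5 (R : realType) (m : nat) (I : {set alloc m} -> Prop) :
  (1 <= m)%N ->
  simplicial_complex_on_cube I ->
  (implementable_complex R I <->
   exists lambda : alloc m -> R,
     forall O : {set alloc m}, facet I O <-> maximal_cell lambda O).
Proof.
move=> _ [I_down I_singleton]; split.
- case=> f [f_impl IE].
  (* Singletons are faces, so every allocation is selected somewhere; this
     is what makes lambda finite on the whole cube. *)
  have f_onto a : exists th, f th = a.
    have [th th_a] := (IE [set a]).1 (I_singleton a).
    by have [th' [fth' _]] := th_a a (set11 a) 1 ltr01; exists th'.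
  have [lam f_max] := implementable_upper_cell f_impl f_onto.
  exists lam; apply: facet_down_closure => O.
  rewrite IE; exact: indiff_complexE.
- case=> lam IE; have [f f_max] := upper_cell_selection lam.
  exists f; split; first exact: upper_cell_implementable.
  move=> O; rewrite (indiff_complexE f_max); exact: down_closure_facet.
Qed.
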